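(* Let $G$ be a bipartite graph with left degree $D$ that has $(\tfrac 2 3 D + 2)$-expansion up to $K+1$. Let $Y$ be a set of right nodes with $\#Y \le 2K+1$, and let $P$ be a set of left nodes such that every $x \in P$ satisfies $\#({\mathcal N}(x) \cap Y) \ge D/3$. Then $\#P \le K$.
   Context: ${\mathcal N}(x)$ is the set of neighbors of $x$. Left degree $D$ means every left node has exactly $D$ neighbors. A graph has $e$-expansion up to $K$ if every set $S$ of left nodes with $\#S\le K$ has at least $e\,\#S$ neighbors. *)

From mathcomp Require Import all_boot all_order all_algebra.
Set Implicit Arguments. Unset Strict Implicit. Unset Printing Implicit Defensive.
Import Order.TTheory GRing.Theory Num.Theory.

(* A bipartite graph with left nodes of type L and right nodes of type R
   is given by its neighbour map N : L -> {set R}. *)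

Definition nbhd (L R : finType) (N : L -> {set R}) (S : {set L}) : {set R} :=
  \bigcup_(x in S) N x.

Definition left_degree (L R : finType) (N : L -> {set R}) (D : nat) : Prop :=
  forall x : L, #|N x| = D.

Definition expansion_upto (L R : finType) (N : L -> {set R}) (e : rat) (K : nat)
  : Prop :=
  forall S : {set L}, #|S| <= K -> (e * #|S|%:R <= #|nbhd N S|%:R)%R.

From mathcomp Require Import all_boot all_order all_algebra.
From mathcomp Require Import ring.
Import Order.TTheory GRing.Theory Num.Theory.

Set Implicit Arguments.
Unset Strict Implicit.
Unset Printing Implicit Defensive.

(* If more than K left nodes had at least D/3 neighbours in Y, take K+1 of
   them.  Each has at most 2D/3 neighbours outside Y, so together they have at
   most #Y + (K+1) 2D/3 <= 2K+1 + (K+1) 2D/3 neighbours, while expansion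
   demands at least (K+1) 2D/3 + 2(K+1). *)

Lemma subset_of_card (T : finType) (A : {set T}) k :
  k <= #|A| -> exists2 B : {set T}, B \subset A & #|B| = k.
Proof.
elim: k => [|k IHk] leA; first by exists set0; rewrite ?sub0set ?cards0.
have [B sBA cardB] := IHk (ltnW leA).
have : 0 < #|A :\: B| by rewrite cardsD (setIidPr sBA) cardB subn_gt0.
case/card_gt0P => x; rewrite inE => /andP [xNB xA].
exists (x |: B); first by rewrite subUset sub1set xA.
by rewrite cardsU1 xNB cardB.
Qed.

Lemma card_bigcup_leq_sum (I T : finType) (S : {set I}) (F : I -> {set T}) :
  #|\bigcup_(i in S) F i| <= \sum_(i in S) #|F i|.
Proof.
elim/big_rec2: _ => [|i n U _ leUn]; first by rewrite cards0.
by rewrite (leq_trans (leq_card_setU (F i) U).1) ?leq_add2l.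
Qed.

Section NeighbourCount.

Variables (L R : finType) (N : L -> {set R}).

Lemma card_nbhd_leq_outside (S : {set L}) (Y : {set R}) :
  #|nbhd N S| <= #|Y| + \sum_(x in S) #|N x :\: Y|.
Proof.
have sub_split : nbhd N S \subset Y :|: \bigcup_(x in S) (N x :\: Y).
  apply/subsetP => r /bigcupP [x xS Nxr]; rewrite inE.
  have [//|rNY] := boolP (r \in Y).
  by apply/bigcupP; exists x; rewrite // inE rNY.
apply: leq_trans (subset_leq_card sub_split) _.
apply: leq_trans (leq_card_setU _ _).1 _.
by rewrite leq_add2l card_bigcup_leq_sum.
Qed.

Lemma card_nbhd_leq_degree (F : numDomainType) (D : nat) (a : F)
    (S : {set L}) (Y : {set R}) :
  left_degree N D -> (forall x, x \in S -> a <= #|N x :&: Y|%:R)%R ->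
  (#|nbhd N S|%:R <= #|Y|%:R + #|S|%:R * (D%:R - a) :> F)%R.
Proof.
move=> degD inY.
have outside x : x \in S -> (#|N x :\: Y|%:R <= D%:R - a :> F)%R.
  move=> xS; rewrite -(degD x) -(cardsID Y (N x)) natrD.
  by rewrite addrAC lerDr subr_ge0 inY.
apply: le_trans (_ : #|Y|%:R + \sum_(x in S) #|N x :\: Y|%:R <= _)%R.
  by rewrite -natr_sum -natrD ler_nat card_nbhd_leq_outside.
by rewrite lerD2l mulr_natl -sumr_const ler_sum.
Qed.

End NeighbourCount.

Theorem lemma5 (L R : finType) (N : L -> {set R}) (D K : nat)
  (hdeg : left_degree N D)
  (hexp : expansion_upto N (2%:R / 3%:R * D%:R + 2%:R)%R K.+1)
  (Y : {set R}) (hY : #|Y| <= K.*2.+1)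
  (P : {set L})
  (hP : forall x, x \in P -> (D%:R / 3%:R <= #|N x :&: Y|%:R :> rat)%R) :
  #|P| <= K.
Proof.
rewrite leqNgt; apply/negP => /subset_of_card [S sSP cardS].
have lower := hexp S (eq_leq cardS).
have upper := card_nbhd_leq_degree (S := S) hdeg
  (fun x xS => hP x (subsetP sSP x xS)).
have two_thirds : (D%:R - D%:R / 3 = 2 / 3 * D%:R :> rat)%R by field.
rewrite two_thirds cardS mulrC in upper; rewrite cardS in lower.
have := le_trans lower upper.
rewrite mulrDl addrC lerD2r -natrM ler_nat => /leq_trans/(_ hY).
by rewrite mul2n doubleS ltnn.
Qed.
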